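(* Let $n$ be a positive integer. (a) If $\lambda^{3n/2}>(1+\sqrt2)C_1$, then $c_n>0$. (b) If $\lambda^{3n/2}>\frac{(1+\sqrt2)C_1}{\sqrt\lambda(\sqrt\lambda-1)}$, then $c_{n+1}>c_n$.
   Context: Standing setup: $p,q\in\mathbb{Z}$ are such that $x^3-px-q$ is irreducible over $\mathbb{Q}$ with exactly one real root $\theta$ (one has $3\theta^2-4p>0$ and $3\theta^2-p>0$). $K=\mathbb{Q}(\theta)\subset\mathbb{R}$, $\mathcal{O}_K$ its ring of integers. $d$ is a positive integer with $\mathcal{O}_K\subseteq\frac1d\mathbb{Z}[\theta]$. $\lambda\in\mathcal{O}_K$ is a unit with $\lambda>1$. For $n\ge1$ the rationals $a_n,b_n,c_n$ are defined by $a_n+b_n\theta+c_n\theta^2=\lambda^n$, and $X_n=a_n+pc_n-b_n\theta$, $Y_n=a_n+pc_n-c_n\theta^2$, $Z_n=b_n\theta-c_n\theta^2$, $k_n=dc_n$. Constants: $C_1=\max\{\sqrt2,\ \frac{\sqrt2|\theta|}{\sqrt{3\theta^2-4p}}\}$, $C_2=\frac{\sqrt d}{\sqrt{3\theta^2-p}}$. *)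

From HB Require Import structures.
From mathcomp Require Import all_boot all_order all_algebra.
From Stdlib Require Import ZArith.

Set Implicit Arguments. Unset Strict Implicit. Unset Printing Implicit Defensive.

Definition Z_to_int (z : Z) : int :=
  match z with
  | Z0 => Posz 0
  | Zpos n => Posz (Pos.to_nat n)
  | Zneg n => (- Posz (Pos.to_nat n))%R
  end.

Definition cubic_poly (p q : Z) : {poly rat} :=
  ('X^3 - ((Z_to_int p)%:~R : rat) *: 'X - ((Z_to_int q)%:~R : rat)%:P)%R.

Definition cubic_irreducible (p q : Z) : Prop := irreducible_poly (cubic_poly p q).

From Stdlib Require Import Reals QArith Qreals List.
Local Open Scope R_scope.

Definition evalZ (l : list Z) (x : R) : R :=
  fold_right (fun c acc => IZR c + x * acc) 0 l.

(* x is an algebraic integer: root of a monic polynomial with integer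
   coefficients, namely X^(length l) + sum_i l_i X^i *)
Definition alg_int (x : R) : Prop :=
  exists l : list Z, x ^ length l + evalZ l x = 0.

(* x belongs to K = Q(theta) (theta of degree 3: K = Q + Q theta + Q theta^2) *)
Definition in_K (theta x : R) : Prop :=
  exists a b c : Q, x = Q2R a + Q2R b * theta + Q2R c * theta ^ 2.

Definition in_OK (theta x : R) : Prop := in_K theta x /\ alg_int x.

Definition unit_OK (theta x : R) : Prop := in_OK theta x /\ in_OK theta (/ x).

Definition C1_const (p : Z) (theta : R) : R :=
  Rmax (sqrt 2) (sqrt 2 * Rabs theta / sqrt (3 * theta ^ 2 - 4 * IZR p)).

(* Let sigma be the complex embedding of K = Q(theta).  In the coordinates
   (a, b, c) of x = a + b theta + c theta^2, |sigma x|^2 is a positive definite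
   quadratic form, multiplicative in x, and x |sigma x|^2 is the norm of x.  The
   norm of an algebraic integer x > 0 of K is >= 1: the powers x^k have bounded
   denominators (d^M x^k lies in Z[theta]), so the norms x^k |sigma x^k|^2 cannot
   tend to 0.  Applied to lambda and 1/lambda this gives |sigma lambda^n|^2 = lambda^-n.
   Expressing c through the trace gives c D E = x D + 2 Z with |Z|^2 <= |sigma x|^2 D E
   (D = 3 theta^2 - 4p, E = 3 theta^2 - p), so c > 0 whenever x^2 > (4E/D) |sigma x|^2;
   (a) and (b) are this criterion for x = lambda^n and x = lambda^n (lambda - 1),
   using |sigma(lambda - 1)| <= 1 + lambda^(-1/2) and 4E/D <= ((1 + sqrt 2) C1)^2. *)

Set Warnings "-notation-overridden,-ambiguous-paths,-deprecated,-require-in-module".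
From Pilot Require Import Defs.
From Stdlib Require Import Reals QArith Qreals ZArith List.

Module IrreducibleCubic.
From HB Require Import structures.
From mathcomp Require Import all_boot all_order all_algebra ssrZ ring.
From Stdlib Require Import ZArith Lia.
Import GRing.Theory.
Local Open Scope ring_scope.

Lemma Z_to_intE z : Z_to_int z = int_of_Z z.
Proof.
case: z => //= k; have := Pos2Nat.is_pos k.
by case: (Pos.to_nat k) => [|m] H; [lia | rewrite NegzE].
Qed.

Lemma size_cubic (P Q : rat) : size ('X^3 - P *: 'X - Q%:P : {poly rat}) = 4%N.
Proof.
rewrite -addrA size_polyDl ?size_polyXn //.
apply: (leq_ltn_trans (size_polyD _ _)).
rewrite !size_opp gtn_max; apply/andP; split.
  by apply: (leq_ltn_trans (size_scale_leq _ _)); rewrite size_polyX.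
exact: (leq_ltn_trans (size_polyC_leq1 _)).
Qed.

Lemma homogenise_cubic (N E P Q : rat) : E != 0 ->
  ((N / E) ^+ 3 - P * N / E - Q) * E ^+ 3 = N*N*N - P*N*E*E - Q*E*E*E.
Proof. by move=> HE; field. Qed.

(* A rational root n/e would give the linear factor 'X - n/e of a cubic. *)
Lemma no_int_root (p q : Z) : Defs.cubic_irreducible p q ->
  forall n e : Z, e <> 0%Z -> (n*n*n - p*n*e*e - q*e*e*e)%Z <> 0%Z.
Proof.
move=> [_ Hirr] n e He H.
set x : rat := (int_of_Z n)%:~R / (int_of_Z e)%:~R.
have Ee : (int_of_Z e)%:~R != 0 :> rat.
  by rewrite intr_eq0; apply/eqP => E0; apply: He; rewrite -(int_of_ZK e) E0.
have Hz : int_of_Z (n*n*n - p*n*e*e - q*e*e*e)%Z = 0 by rewrite H.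
rewrite !rmorphB !rmorphM /= in Hz.
have Hr : root (cubic_poly p q) x.
  rewrite /root /cubic_poly !hornerE !Z_to_intE; apply/eqP.
  have HNE : ((int_of_Z n)%:~R * (int_of_Z n)%:~R * (int_of_Z n)%:~R
    - (int_of_Z p)%:~R * (int_of_Z n)%:~R * (int_of_Z e)%:~R * (int_of_Z e)%:~R
    - (int_of_Z q)%:~R * (int_of_Z e)%:~R * (int_of_Z e)%:~R * (int_of_Z e)%:~R : rat) = 0.
    by rewrite -!intrM -!intrB Hz.
  apply: (mulIf (expf_neq0 3 Ee)); rewrite mul0r -HNE; exact: homogenise_cubic.
have := Hirr ('X - x%:P); rewrite size_XsubC => /(_ isT).
move/(_ (etrans (dvdp_XsubCl _ _) Hr)) => /eqp_size.
by rewrite size_XsubC /cubic_poly size_cubic.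
Qed.

End IrreducibleCubic.

From Stdlib Require Import Lra Lia Psatz.
Open Scope R_scope.

Definition is_rat (x : R) : Prop := exists r : Q, x = Q2R r.

Lemma is_rat_Q2R r : is_rat (Q2R r).
Proof. now exists r. Qed.
Lemma is_rat_IZR z : is_rat (IZR z).
Proof. exists (inject_Z z). unfold Q2R; simpl. field. Qed.
Lemma is_rat_INR n : is_rat (INR n).
Proof. rewrite INR_IZR_INZ. apply is_rat_IZR. Qed.
Lemma is_rat_add x y : is_rat x -> is_rat y -> is_rat (x + y).
Proof. intros [r ->] [s ->]. exists (r + s)%Q. now rewrite Q2R_plus. Qed.
Lemma is_rat_mul x y : is_rat x -> is_rat y -> is_rat (x * y).
Proof. intros [r ->] [s ->]. exists (r * s)%Q. now rewrite Q2R_mult. Qed.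
Lemma is_rat_opp x : is_rat x -> is_rat (- x).
Proof. intros [r ->]. exists (- r)%Q. now rewrite Q2R_opp. Qed.
Lemma is_rat_sub x y : is_rat x -> is_rat y -> is_rat (x - y).
Proof. intros. apply is_rat_add; auto. now apply is_rat_opp. Qed.
Lemma is_rat_inv x : is_rat x -> is_rat (/ x).
Proof.
intros [r ->]. destruct (Qeq_dec r 0) as [E|E].
- exists 0%Q. rewrite E. unfold Q2R; simpl. rewrite Rmult_0_l, Rinv_0. lra.
- exists (/ r)%Q. now rewrite Q2R_inv.
Qed.
Lemma is_rat_div x y : is_rat x -> is_rat y -> is_rat (x / y).
Proof. intros. apply is_rat_mul; auto. now apply is_rat_inv. Qed.
Lemma is_rat_pow x n : is_rat x -> is_rat (x ^ n).
Proof. intro H. induction n; simpl. apply (is_rat_IZR 1). now apply is_rat_mul. Qed.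

Lemma cubic_no_rat_root (p q : Z) :
  (forall n e : Z, e <> 0%Z -> (n*n*n - p*n*e*e - q*e*e*e)%Z <> 0%Z) ->
  forall x, is_rat x -> x ^ 3 - IZR p * x - IZR q <> 0.
Proof.
intros Hint x [[n e] ->] H. unfold Q2R in H; simpl in H.
assert (He : IZR (Zpos e) <> 0) by (apply not_0_IZR; lia).
apply (Hint n (Zpos e)); [lia |]. apply eq_IZR.
rewrite !minus_IZR, !mult_IZR.
transitivity (IZR (Zpos e) ^ 3 * ((IZR n * / IZR (Zpos e)) ^ 3
  - IZR p * (IZR n * / IZR (Zpos e)) - IZR q)); [field; auto |].
simpl; rewrite H; ring.
Qed.

Section RationalCubic.
Variables (p q : Z) (th : R).
Hypothesis Hroot : th ^ 3 - IZR p * th - IZR q = 0.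
Hypothesis no_rat_root : forall x, is_rat x -> x ^ 3 - IZR p * x - IZR q <> 0.

Lemma root_irrational : ~ is_rat th.
Proof. intro Hq. exact (no_rat_root th Hq Hroot). Qed.

(* If c <> 0, dividing the cubic by the quadratic th^2 + (b/c) th + a/c
   leaves a rational linear remainder that vanishes at th. *)
Lemma rat_lincomb_eq0 a b c : is_rat a -> is_rat b -> is_rat c ->
  a + b * th + c * th ^ 2 = 0 -> a = 0 /\ b = 0 /\ c = 0.
Proof.
intros Ha Hb Hc H.
destruct (Req_dec c 0) as [Hc0|Hc0].
- subst c. destruct (Req_dec b 0) as [Hb0|Hb0].
  + subst b. split; [lra | split; reflexivity].
  + exfalso. apply root_irrational. replace th with (- a / b) by (field_simplify_eq; lra).
    apply is_rat_div; auto. now apply is_rat_opp.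
- exfalso. set (be := b / c). set (ga := a / c).
  assert (Qbe : is_rat be) by (apply is_rat_div; auto).
  assert (Qga : is_rat ga) by (apply is_rat_div; auto).
  assert (Hrem : (be * be - ga - IZR p) * th + (be * ga - IZR q) = 0).
  { replace ((be * be - ga - IZR p) * th + (be * ga - IZR q)) with
      (th ^ 3 - IZR p * th - IZR q - (a + b * th + c * th ^ 2) / c * (th - be))
      by (unfold be, ga; field; auto).
    rewrite Hroot, H. field. auto. }
  destruct (Req_dec (be * be - ga - IZR p) 0) as [Hk|Hk].
  + apply (no_rat_root be Qbe).
    replace (be ^ 3 - IZR p * be - IZR q)
      with (be * (be * be - ga - IZR p) + (be * ga - IZR q)) by ring.
    rewrite Hk in Hrem |- *. lra.
  + apply root_irrational.
    replace th with (- (be * ga - IZR q) / (be * be - ga - IZR p)) by (field_simplify_eq; lra).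
    assert (QP := is_rat_IZR p). assert (QQ := is_rat_IZR q).
    repeat (apply is_rat_div || apply is_rat_opp || apply is_rat_sub || apply is_rat_mul); auto.
Qed.

(* If D <= 0, the roots (-th +- sqrt(-D))/2 of x^2 + th x + th^2 - p are real
   roots of the cubic, so both equal th, forcing th = 0. *)
Lemma discr_pos :
  (forall x : R, x ^ 3 - IZR p * x - IZR q = 0 -> x = th) -> 0 < 3 * th ^ 2 - 4 * IZR p.
Proof.
intro Huniq. destruct (Rlt_dec 0 (3 * th ^ 2 - 4 * IZR p)) as [H|H]; auto. exfalso.
set (s := sqrt (-(3 * th ^ 2 - 4 * IZR p))).
assert (Hs : s * s = -(3 * th ^ 2 - 4 * IZR p)) by (apply sqrt_sqrt; lra).
assert (other_root : forall x, x * x + th * x + th * th - IZR p = 0 -> x = th).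
{ intros x Hx. apply Huniq.
  replace (x ^ 3 - IZR p * x - IZR q) with
    ((x - th) * (x * x + th * x + th * th - IZR p) + (th ^ 3 - IZR p * th - IZR q)) by ring.
  rewrite Hx, Hroot. ring. }
assert (h1 := other_root ((- th + s) / 2) ltac:(field_simplify_eq; nra)).
assert (h2 := other_root ((- th - s) / 2) ltac:(field_simplify_eq; nra)).
apply root_irrational. replace th with 0 by lra. apply (is_rat_IZR 0).
Qed.

End RationalCubic.

Definition evalK (th : R) (t : R * R * R) : R :=
  let '(a, b, c) := t in a + b * th + c * th ^ 2.

Lemma evalK_triple th a b c : evalK th (a, b, c) = a + b * th + c * th ^ 2.
Proof. reflexivity. Qed.

Definition rat_coords (t : R * R * R) : Prop :=
  let '(a, b, c) := t in is_rat a /\ is_rat b /\ is_rat c.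

(* Coordinates of a product, reduced with th^3 = P th + Qv. *)
Definition mulK (P Qv : R) (t t' : R * R * R) : R * R * R :=
  let '(a, b, c) := t in let '(a', b', c') := t' in
  (a * a' + Qv * (b * c' + c * b'),
   a * b' + b * a' + P * (b * c' + c * b') + Qv * c * c',
   a * c' + b * b' + c * a' + P * c * c').

Fixpoint powK (P Qv : R) (t : R * R * R) (n : nat) : R * R * R :=
  match n with O => (1, 0, 0) | S k => mulK P Qv t (powK P Qv t k) end.

(* |a + b w + c w^2|^2 for a complex root w of the cubic, computed from
   w + conj w = - th and w * conj w = th^2 - P. *)
Definition conj_norm (P th : R) (t : R * R * R) : R :=
  let '(a, b, c) := t in
  a * a - a * b * th + a * c * (2 * P - th * th) + b * b * (th * th - P)
  - b * c * th * (th * th - P) + c * c * (th * th - P) ^ 2.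

Definition norm_form (P Qv : R) (t : R * R * R) : R :=
  let '(a, b, c) := t in
  a ^ 3 + 2 * a ^ 2 * c * P - a * b ^ 2 * P - 3 * a * b * c * Qv + a * c ^ 2 * P ^ 2
  + b ^ 3 * Qv - b * c ^ 2 * P * Qv + c ^ 3 * Qv ^ 2.

Lemma conj_norm_sos (P th a b c : R) : conj_norm P th (a, b, c) =
  (a - b * th / 2 + c * (P - th * th / 2)) ^ 2 + (3 * th ^ 2 - 4 * P) / 4 * (b - c * th) ^ 2.
Proof. simpl. field. Qed.

Lemma norm_form_scale (P Qv a b c k : R) : k <> 0 ->
  norm_form P Qv (a / k, b / k, c / k) = norm_form P Qv (a, b, c) / k ^ 3.
Proof. intro. simpl. field. auto. Qed.

Lemma norm_form_IZR (p q u v w : Z) :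
  exists z, norm_form (IZR p) (IZR q) (IZR u, IZR v, IZR w) = IZR z.
Proof.
exists (u*u*u + 2*u*u*w*p - u*v*v*p - 3*u*v*w*q + u*w*w*p*p + v*v*v*q - v*w*w*p*q
  + w*w*w*q*q)%Z.
unfold norm_form. repeat rewrite ?minus_IZR, ?plus_IZR, ?mult_IZR. ring.
Qed.

Section Multiplicativity.
Variables (P Qv th : R).
Hypothesis Hroot : th ^ 3 - P * th - Qv = 0.

(* Eliminating Qv turns each identity into a polynomial identity. *)
Let Qv_eq : Qv = th ^ 3 - P * th.
Proof. lra. Qed.

Lemma evalK_mul t t' : evalK th (mulK P Qv t t') = evalK th t * evalK th t'.
Proof. destruct t as [[a b] c], t' as [[a' b'] c']. rewrite Qv_eq. simpl. ring. Qed.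

Lemma conj_norm_mul t t' :
  conj_norm P th (mulK P Qv t t') = conj_norm P th t * conj_norm P th t'.
Proof. destruct t as [[a b] c], t' as [[a' b'] c']. rewrite Qv_eq. simpl. ring. Qed.

Lemma evalK_conj_norm t : evalK th t * conj_norm P th t = norm_form P Qv t.
Proof. destruct t as [[a b] c]. rewrite Qv_eq. simpl. ring. Qed.

Lemma evalK_pow t n : evalK th (powK P Qv t n) = evalK th t ^ n.
Proof. induction n; simpl powK; [simpl; ring | rewrite evalK_mul, IHn; reflexivity]. Qed.

Lemma conj_norm_pow t n : conj_norm P th (powK P Qv t n) = conj_norm P th t ^ n.
Proof. induction n; simpl powK; [simpl; ring | rewrite conj_norm_mul, IHn; reflexivity]. Qed.

End Multiplicativity.

Section Coordinates.
Variables (p q : Z) (th : R).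
Hypothesis Hroot : th ^ 3 - IZR p * th - IZR q = 0.
Hypothesis no_rat_root : forall x, is_rat x -> x ^ 3 - IZR p * x - IZR q <> 0.
Hypothesis discr : 0 < 3 * th ^ 2 - 4 * IZR p.

Lemma coords_unique t t' : rat_coords t -> rat_coords t' -> evalK th t = evalK th t' -> t = t'.
Proof.
destruct t as [[a b] c], t' as [[a' b'] c']; simpl.
intros (Ha & Hb & Hc) (Ha' & Hb' & Hc') E.
destruct (rat_lincomb_eq0 p q th Hroot no_rat_root (a - a') (b - b') (c - c'))
  as (Ea & Eb & Ec); try apply is_rat_sub; auto; try lra.
f_equal; [f_equal |]; lra.
Qed.

Lemma rat_coords_mulK t t' : rat_coords t -> rat_coords t' -> rat_coords (mulK (IZR p) (IZR q) t t').
Proof.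
destruct t as [[a b] c], t' as [[a' b'] c']; simpl.
intros (Ha & Hb & Hc) (Ha' & Hb' & Hc').
assert (QP := is_rat_IZR p). assert (QQ := is_rat_IZR q).
repeat split; repeat (apply is_rat_add || apply is_rat_mul); auto.
Qed.

Lemma rat_coords_powK t n : rat_coords t -> rat_coords (powK (IZR p) (IZR q) t n).
Proof.
intro H. induction n; simpl powK.
- repeat split; [apply (is_rat_IZR 1) | apply (is_rat_IZR 0) | apply (is_rat_IZR 0)].
- now apply rat_coords_mulK.
Qed.

Lemma conj_norm_pos t : rat_coords t -> evalK th t <> 0 -> 0 < conj_norm (IZR p) th t.
Proof.
destruct t as [[a b] c]. intros (Ha & Hb & Hc) Hne. rewrite conj_norm_sos.
set (X := a - b * th / 2 + c * (IZR p - th * th / 2)). set (W := b - c * th).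
assert (sq_pos : forall x, x <> 0 -> 0 < x ^ 2).
{ intros x Hx. rewrite <- Rsqr_pow2. now apply Rsqr_pos_lt. }
assert (HX := pow2_ge_0 X). assert (HW := pow2_ge_0 W).
assert (HDW : 0 <= (3 * th ^ 2 - 4 * IZR p) / 4 * W ^ 2) by (apply Rmult_le_pos; lra).
destruct (Req_dec W 0) as [HW0|HW0].
- destruct (Req_dec c 0) as [Hc0|Hc0].
  + subst c. assert (b = 0) by (unfold W in HW0; lra). subst b.
    assert (HXa : X = a) by (unfold X; field).
    assert (0 < X ^ 2) by (apply sq_pos; rewrite HXa; intro; apply Hne; simpl; lra).
    lra.
  + exfalso. apply (root_irrational p q th Hroot no_rat_root).
    replace th with (b / c) by (unfold W in HW0; field_simplify_eq; lra). now apply is_rat_div.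
- assert (0 < W ^ 2) by auto.
  assert (0 < (3 * th ^ 2 - 4 * IZR p) / 4 * W ^ 2) by (apply Rmult_lt_0_compat; lra).
  lra.
Qed.

End Coordinates.

Lemma in_K_coords th x : in_K th x -> exists t, rat_coords t /\ evalK th t = x.
Proof.
intros (a & b & c & ->). exists (Q2R a, Q2R b, Q2R c).
split; [repeat split; apply is_rat_Q2R | reflexivity].
Qed.

Definition in_Ztheta (th x : R) : Prop :=
  exists u v w : Z, x = evalK th (IZR u, IZR v, IZR w).

Section IntegralElements.
Variables (p q : Z) (th : R).
Hypothesis Hroot : th ^ 3 - IZR p * th - IZR q = 0.

Lemma in_Ztheta_IZR z : in_Ztheta th (IZR z).
Proof. exists z, 0%Z, 0%Z. simpl. ring. Qed.

Lemma in_Ztheta_add x y : in_Ztheta th x -> in_Ztheta th y -> in_Ztheta th (x + y).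
Proof.
intros (u & v & w & ->) (u' & v' & w' & ->). exists (u + u')%Z, (v + v')%Z, (w + w')%Z.
simpl. rewrite !plus_IZR. ring.
Qed.

Lemma in_Ztheta_mul x y : in_Ztheta th x -> in_Ztheta th y -> in_Ztheta th (x * y).
Proof.
intros (u & v & w & ->) (u' & v' & w' & ->).
rewrite <- (evalK_mul (IZR p) (IZR q) th Hroot).
exists (u * u' + q * (v * w' + w * v'))%Z,
  (u * v' + v * u' + p * (v * w' + w * v') + q * w * w')%Z,
  (u * w' + v * v' + w * u' + p * w * w')%Z.
simpl. rewrite !plus_IZR, !mult_IZR, !plus_IZR, !mult_IZR. reflexivity.
Qed.

Lemma in_Ztheta_pow x n : in_Ztheta th x -> in_Ztheta th (x ^ n).
Proof.
intro H. induction n; simpl; [apply (in_Ztheta_IZR 1) | now apply in_Ztheta_mul].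
Qed.

Variable d : nat.

Lemma in_Ztheta_scaled_pow_le mu M k : in_Ztheta th (INR d * mu) -> (k <= M)%nat ->
  in_Ztheta th (INR d ^ M * mu ^ k).
Proof.
intros H Hk. replace (INR d ^ M * mu ^ k) with (INR d ^ (M - k) * (INR d * mu) ^ k).
- apply in_Ztheta_mul; apply in_Ztheta_pow; auto.
  rewrite INR_IZR_INZ. apply in_Ztheta_IZR.
- rewrite Rpow_mult_distr, <- Rmult_assoc, <- pow_add. do 2 f_equal. lia.
Qed.

Lemma in_Ztheta_scaled_evalZ mu M l j :
  (forall i, (i < length l)%nat -> in_Ztheta th (INR d ^ M * mu ^ (j + i))) ->
  in_Ztheta th (INR d ^ M * (mu ^ j * evalZ l mu)).
Proof.
revert j. induction l as [|z l IH]; intros j Hj; simpl.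
- replace (INR d ^ M * (mu ^ j * 0)) with (IZR 0) by ring. apply in_Ztheta_IZR.
- replace (INR d ^ M * (mu ^ j * (IZR z + mu * evalZ l mu))) with
    (IZR z * (INR d ^ M * mu ^ (j + 0)) + INR d ^ M * (mu ^ S j * evalZ l mu))
    by (rewrite Nat.add_0_r; simpl; ring).
  apply in_Ztheta_add.
  + apply in_Ztheta_mul; [apply in_Ztheta_IZR | apply Hj; simpl; lia].
  + apply IH. intros i Hi. replace (S j + i)%nat with (j + S i)%nat by lia.
    apply Hj. simpl; lia.
Qed.

(* The monic equation of degree M rewrites mu^k, k > M, through lower powers,
   so the denominator d^M suffices for every power of mu. *)
Lemma in_Ztheta_scaled_pow mu l : mu ^ length l + evalZ l mu = 0 ->
  in_Ztheta th (INR d * mu) -> forall k, in_Ztheta th (INR d ^ length l * mu ^ k).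
Proof.
intros Hl H1 k. induction k as [k IH] using (well_founded_induction lt_wf).
destruct (le_lt_dec k (length l)) as [Hk|Hk].
- now apply in_Ztheta_scaled_pow_le.
- replace (INR d ^ length l * mu ^ k)
    with (IZR (-1) * (INR d ^ length l * (mu ^ (k - length l) * evalZ l mu))).
  + apply in_Ztheta_mul; [apply in_Ztheta_IZR |].
    apply in_Ztheta_scaled_evalZ. intros i Hi. apply IH. lia.
  + replace k with (k - length l + length l)%nat at 2 by lia. rewrite pow_add.
    replace (mu ^ length l) with (- evalZ l mu) by lra. simpl. ring.
Qed.

End IntegralElements.

Section UnitNorm.
Variables (p q : Z) (th : R).
Hypothesis Hroot : th ^ 3 - IZR p * th - IZR q = 0.
Hypothesis no_rat_root : forall x, is_rat x -> x ^ 3 - IZR p * x - IZR q <> 0.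
Hypothesis discr : 0 < 3 * th ^ 2 - 4 * IZR p.
Variable d : nat.
Hypothesis Hd : (0 < d)%nat.

(* If the norm N = mu * |sigma mu|^2 were < 1, then N^k = norm_form(u,v,w) / d^(3M)
   with integers u, v, w would be a positive number below 1 / d^(3M). *)
Lemma norm_ge1 mu t : rat_coords t -> evalK th t = mu -> 0 < mu -> alg_int mu ->
  in_Ztheta th (INR d * mu) -> 1 <= mu * conj_norm (IZR p) th t.
Proof.
intros Ht Hev Hmu [l Hl] Hd_mu.
set (N := mu * conj_norm (IZR p) th t).
assert (HN : 0 < N).
{ apply Rmult_lt_0_compat; auto. apply (conj_norm_pos p q); auto; lra. }
destruct (Rlt_le_dec N 1) as [HN1|]; auto. exfalso.
set (del := INR d ^ length l).
assert (Hdel : 0 < del) by (apply pow_lt, lt_0_INR; lia).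
assert (Hdel3 : 0 < / del ^ 3) by (apply Rinv_0_lt_compat, pow_lt; auto).
destruct (pow_lt_1_zero N ltac:(rewrite Rabs_pos_eq; lra) (/ del ^ 3) Hdel3) as [k Hk].
specialize (Hk k (Nat.le_refl k)). rewrite Rabs_pos_eq in Hk by (apply pow_le; lra).
destruct (in_Ztheta_scaled_pow p q th Hroot d mu l Hl Hd_mu k) as (u & v & w & Hk_int).
fold del in Hk_int.
set (s := (IZR u / del, IZR v / del, IZR w / del)).
assert (Hs : s = powK (IZR p) (IZR q) t k).
{ apply (coords_unique p q th Hroot no_rat_root).
  - repeat split; apply is_rat_div; try apply is_rat_IZR; apply is_rat_pow, is_rat_INR.
  - now apply rat_coords_powK.
  - rewrite (evalK_pow _ _ _ Hroot), Hev. unfold s, evalK in *.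
    apply (Rmult_eq_reg_l del); [rewrite Hk_int; field |]; lra. }
assert (HNk : N ^ k = norm_form (IZR p) (IZR q) (IZR u, IZR v, IZR w) / del ^ 3).
{ unfold N. rewrite Rpow_mult_distr, <- Hev, <- (evalK_pow _ _ _ Hroot),
    <- (conj_norm_pow _ _ _ Hroot), <- Hs, (evalK_conj_norm _ _ _ Hroot).
  apply norm_form_scale. lra. }
destruct (norm_form_IZR p q u v w) as [z Hz]. rewrite Hz in HNk.
assert (Hz0 : 0 < IZR z).
{ apply (Rmult_lt_reg_r (/ del ^ 3)); auto. rewrite Rmult_0_l. change (0 < IZR z / del ^ 3). rewrite <- HNk.
  apply pow_lt; auto. }
assert (Hz1 : 1 <= IZR z) by (apply IZR_le; apply lt_IZR in Hz0; lia).
unfold Rdiv in HNk. nra.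
Qed.

Lemma unit_conj_norm lam t : rat_coords t -> evalK th t = lam -> 0 < lam -> unit_OK th lam ->
  (forall x, in_OK th x -> in_Ztheta th (INR d * x)) -> conj_norm (IZR p) th t = / lam.
Proof.
intros Ht Hev Hlam [[HK A] [HKi Ai]] Hden.
destruct (in_K_coords th (/ lam) HKi) as (ti & Hti & Hevi).
assert (N1 := norm_ge1 lam t Ht Hev Hlam A (Hden lam (conj HK A))).
assert (N2 := norm_ge1 (/ lam) ti Hti Hevi (Rinv_0_lt_compat lam Hlam) Ai
  (Hden (/ lam) (conj HKi Ai))).
assert (Hprod : conj_norm (IZR p) th t * conj_norm (IZR p) th ti = 1).
{ rewrite <- (conj_norm_mul _ (IZR q) _ Hroot).
  replace (mulK (IZR p) (IZR q) t ti) with (1, 0, 0); [simpl; ring |].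
  apply (coords_unique p q th Hroot no_rat_root).
  - repeat split; [apply (is_rat_IZR 1) | apply (is_rat_IZR 0) | apply (is_rat_IZR 0)].
  - now apply rat_coords_mulK.
  - rewrite (evalK_mul _ _ _ Hroot), Hev, Hevi. simpl. field. lra. }
assert (lam * conj_norm (IZR p) th t = 1).
{ assert (lam * conj_norm (IZR p) th t * (/ lam * conj_norm (IZR p) th ti) = 1)
    by (rewrite <- Hprod; field; lra).
  nra. }
apply (Rmult_eq_reg_l lam); [rewrite Rinv_r |]; lra.
Qed.

End UnitNorm.

Lemma weighted_cauchy_schwarz (X W A B k : R) : 0 < k ->
  (X * A + W * B) ^ 2 <= (X ^ 2 + k * W ^ 2) * (A ^ 2 + B ^ 2 / k).
Proof.
intro Hk.
assert (E : (X ^ 2 + k * W ^ 2) * (A ^ 2 + B ^ 2 / k) - (X * A + W * B) ^ 2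
  = (X * B - k * W * A) ^ 2 / k) by (field; lra).
assert (0 <= (X * B - k * W * A) ^ 2 / k)
  by (apply Rmult_le_pos; [apply pow2_ge_0 | left; apply Rinv_0_lt_compat; auto]).
lra.
Qed.

(* The trace identity c D E = x D + 2 Z, with Z linear in the two coordinates of
   conj_norm_sos, and Cauchy-Schwarz |Z|^2 <= |sigma x|^2 D E force c > 0
   as soon as x D > 2 |Z|. *)
Lemma third_coord_pos (P th a b c : R) : 0 < 3 * th ^ 2 - 4 * P ->
  0 < evalK th (a, b, c) ->
  4 * (3 * th ^ 2 - P) / (3 * th ^ 2 - 4 * P) * conj_norm P th (a, b, c) < evalK th (a, b, c) ^ 2 ->
  0 < c.
Proof.
set (D := 3 * th ^ 2 - 4 * P). set (E := 3 * th ^ 2 - P). set (x := evalK th (a, b, c)).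
intros HD Hx Hbound.
assert (HE : 0 < E) by (unfold E, D in *; assert (H := pow2_ge_0 th); lra).
set (X := a - b * th / 2 + c * (P - th * th / 2)). set (W := b - c * th).
set (A := 2 * P - 3 * th ^ 2 / 2). set (B := - 3 * th * D / 4).
set (Z := X * A + W * B).
assert (Htrace : c * (D * E) = x * D + 2 * Z) by (unfold x, Z, X, W, A, B, D, E; simpl; field).
assert (HZ : Z ^ 2 <= conj_norm P th (a, b, c) * (D * E)).
{ rewrite conj_norm_sos. fold D X W.
  replace (D * E) with (A ^ 2 + B ^ 2 / (D / 4))
    by (unfold A, B, D, E in *; field; lra).
  apply weighted_cauchy_schwarz. lra. }
assert (HQ : conj_norm P th (a, b, c) * (4 * E) < x ^ 2 * D).
{ apply (Rmult_lt_compat_r D) in Hbound; auto.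
  replace (4 * E / D * conj_norm P th (a, b, c) * D) with (conj_norm P th (a, b, c) * (4 * E))
    in Hbound by (field; lra).
  exact Hbound. }
destruct (Rlt_le_dec 0 c) as [|Hc]; auto. exfalso.
assert (HxD : 0 < x * D) by (apply Rmult_lt_0_compat; auto).
assert (0 < D * E) by (apply Rmult_lt_0_compat; auto).
assert (c * (D * E) <= 0) by nra.
assert (HZneg : x * D <= - 2 * Z) by lra.
assert (Hsq : (x * D) ^ 2 <= 4 * Z ^ 2) by nra.
assert (conj_norm P th (a, b, c) * (4 * E) * D < x ^ 2 * D * D)
  by (apply Rmult_lt_compat_r; auto).
nra.
Qed.

Lemma conj_norm_shift_le (P th a b c : R) : 0 <= 3 * th ^ 2 - 4 * P ->
  conj_norm P th (a - 1, b, c) <= (1 + sqrt (conj_norm P th (a, b, c))) ^ 2.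
Proof.
intro HD. rewrite !conj_norm_sos.
set (X := a - b * th / 2 + c * (P - th * th / 2)). set (W := b - c * th).
replace (a - 1 - b * th / 2 + c * (P - th * th / 2)) with (X - 1) by (unfold X; ring).
assert (HW : 0 <= (3 * th ^ 2 - 4 * P) / 4 * W ^ 2) by (apply Rmult_le_pos; [lra | apply pow2_ge_0]).
set (s := sqrt (X ^ 2 + (3 * th ^ 2 - 4 * P) / 4 * W ^ 2)).
assert (Hs : s * s = X ^ 2 + (3 * th ^ 2 - 4 * P) / 4 * W ^ 2)
  by (apply sqrt_sqrt; assert (H := pow2_ge_0 X); lra).
assert (Hs0 : 0 <= s) by apply sqrt_pos.
assert (HX : X <= s) by (destruct (Rle_dec X s); auto; nra).
nra.
Qed.

Lemma C1_bound (p : Z) (th : R) : 0 < 3 * th ^ 2 - 4 * IZR p ->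
  4 * (3 * th ^ 2 - IZR p) / (3 * th ^ 2 - 4 * IZR p) <= ((1 + sqrt 2) * C1_const p th) ^ 2.
Proof.
intro HD. set (D := 3 * th ^ 2 - 4 * IZR p) in *. set (K := C1_const p th).
assert (s2 : sqrt 2 * sqrt 2 = 2) by (apply sqrt_sqrt; lra).
assert (s2p := sqrt_pos 2).
assert (sD : sqrt D * sqrt D = D) by (apply sqrt_sqrt; lra).
assert (sDp : 0 < sqrt D) by (apply sqrt_lt_R0; auto).
assert (K1 : sqrt 2 <= K) by apply Rmax_l.
assert (K2 : sqrt 2 * Rabs th / sqrt D <= K) by apply Rmax_r.
assert (HA : 0 <= sqrt 2 * Rabs th / sqrt D).
{ apply Rmult_le_pos; [apply Rmult_le_pos; auto; apply Rabs_pos |].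
  left; apply Rinv_0_lt_compat; auto. }
assert (Kth : 2 * (th ^ 2 / D) <= K ^ 2).
{ replace (2 * (th ^ 2 / D)) with ((sqrt 2 * Rabs th / sqrt D) ^ 2).
  - apply pow_incr. auto.
  - replace ((sqrt 2 * Rabs th / sqrt D) ^ 2) with (sqrt 2 ^ 2 * Rabs th ^ 2 / sqrt D ^ 2)
      by (field; lra).
    rewrite pow2_abs. simpl. rewrite !Rmult_1_r, s2, sD. field. lra. }
(* 4E/D = 1 + 9 th^2/D <= K^2/2 + (9/2) K^2 = 5 K^2 <= (1 + sqrt 2)^2 K^2 *)
replace (4 * (3 * th ^ 2 - IZR p) / D) with (1 + 9 * (th ^ 2 / D)) by (unfold D in *; field; lra).
rewrite Rpow_mult_distr.
assert (H58 : 5.8 <= (1 + sqrt 2) ^ 2) by nra.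
assert (0 <= ((1 + sqrt 2) ^ 2 - 5.8) * K ^ 2) by (apply Rmult_le_pos; [lra | apply pow2_ge_0]).
nra.
Qed.

Lemma Rpower_three_halves (lam : R) (n : nat) : 0 < lam ->
  Rpower lam (3 * INR n / 2) = (sqrt lam ^ n) ^ 3.
Proof.
intro H. rewrite <- pow_mult, <- Rpower_pow by (apply sqrt_lt_R0; auto).
rewrite <- Rpower_sqrt, Rpower_mult by auto. f_equal.
rewrite mult_INR. simpl. field.
Qed.

Section UnitPowers.
Variables (p q : Z) (th : R).
Hypothesis Hroot : th ^ 3 - IZR p * th - IZR q = 0.
Hypothesis no_rat_root : forall x, is_rat x -> x ^ 3 - IZR p * x - IZR q <> 0.
Hypothesis discr : 0 < 3 * th ^ 2 - 4 * IZR p.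
Variable d : nat.
Hypothesis Hd : (0 < d)%nat.
Hypothesis Hden : forall x, in_OK th x -> in_Ztheta th (INR d * x).
Variable lam : R.
Hypothesis Hunit : unit_OK th lam.
Hypothesis Hlam : 1 < lam.

Let K := (1 + sqrt 2) * C1_const p th.

Let K_nonneg : 0 <= K.
Proof.
apply Rmult_le_pos; [assert (H := sqrt_pos 2); lra |].
apply Rle_trans with (sqrt 2); [apply sqrt_pos | apply Rmax_l].
Qed.

Let K_bound : 4 * (3 * th ^ 2 - IZR p) / (3 * th ^ 2 - 4 * IZR p) <= K ^ 2.
Proof. exact (C1_bound p th discr). Qed.

Let kappa_nonneg : 0 <= 4 * (3 * th ^ 2 - IZR p) / (3 * th ^ 2 - 4 * IZR p).
Proof.
apply Rmult_le_pos; [assert (H := pow2_ge_0 th); lra | left; apply Rinv_0_lt_compat; lra].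
Qed.

Lemma lam_coords : exists tl, rat_coords tl /\ evalK th tl = lam
  /\ conj_norm (IZR p) th tl = / lam.
Proof.
destruct (in_K_coords th lam (proj1 (proj1 Hunit))) as (tl & Htl & Hev).
exists tl. repeat split; auto. apply (unit_conj_norm p q th Hroot no_rat_root discr d); auto; lra.
Qed.

Lemma conj_norm_lam_pow n t : rat_coords t -> evalK th t = lam ^ n ->
  conj_norm (IZR p) th t = / lam ^ n.
Proof.
intros Ht Hev. destruct lam_coords as (tl & Htl & Hevl & Hnl).
replace t with (powK (IZR p) (IZR q) tl n).
- rewrite (conj_norm_pow _ _ _ Hroot), Hnl. apply pow_inv.
- apply (coords_unique p q th Hroot no_rat_root); auto.
  + now apply rat_coords_powK.
  + now rewrite (evalK_pow _ _ _ Hroot), Hevl.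
Qed.

Variable n : nat.

Let s := sqrt lam.
Let u := s ^ n.

Let s_gt1 : 1 < s.
Proof. unfold s. rewrite <- sqrt_1. apply sqrt_lt_1; lra. Qed.

Let lam_pow : lam ^ n = u ^ 2.
Proof. unfold u, s. rewrite <- pow_mult, Nat.mul_comm, pow_mult, pow2_sqrt; lra. Qed.

Let Rpower_lam : Rpower lam (3 * INR n / 2) = u ^ 3.
Proof. apply Rpower_three_halves. lra. Qed.

Lemma third_coord_pow_pos (a b c : Q) :
  lam ^ n = Q2R a + Q2R b * th + Q2R c * th ^ 2 ->
  Rpower lam (3 * INR n / 2) > (1 + sqrt 2) * C1_const p th -> (0 < c)%Q.
Proof.
intros Hev Hpow. fold K in Hpow. apply Rlt_Qlt. unfold Q2R at 1; simpl; rewrite Rmult_0_l.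
assert (Hu : 0 < u) by (apply pow_lt; lra).
assert (Hn : conj_norm (IZR p) th (Q2R a, Q2R b, Q2R c) = / u ^ 2).
{ rewrite <- lam_pow. apply conj_norm_lam_pow; [repeat split; apply is_rat_Q2R | auto]. }
apply (third_coord_pos (IZR p) th (Q2R a) (Q2R b)); auto; rewrite evalK_triple, <- Hev, lam_pow.
- apply pow_lt; auto.
- rewrite Hn, Rpower_lam in *.
  assert (K ^ 2 < (u ^ 3) ^ 2) by (assert (HK := K_nonneg); nra).
  replace ((u ^ 2) ^ 2) with ((u ^ 3) ^ 2 * / u ^ 2) by (field; lra).
  apply Rmult_lt_compat_r; [apply Rinv_0_lt_compat, pow_lt; auto |].
  assert (HK := K_bound). lra.
Qed.

Lemma third_coord_pow_increasing (a b c a' b' c' : Q) :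
  lam ^ n = Q2R a + Q2R b * th + Q2R c * th ^ 2 ->
  lam ^ (n + 1) = Q2R a' + Q2R b' * th + Q2R c' * th ^ 2 ->
  Rpower lam (3 * INR n / 2) > (1 + sqrt 2) * C1_const p th / (sqrt lam * (sqrt lam - 1)) ->
  (c < c')%Q.
Proof.
intros Hev Hev' Hpow. fold K in Hpow. apply Rlt_Qlt.
destruct lam_coords as [[[al bl] cl] [(Hal & Hbl & Hcl) [Hevl Hnl]]].
rewrite evalK_triple in Hevl.
assert (Hu : 0 < u) by (apply pow_lt; lra).
assert (Hs : s * s = lam) by (apply sqrt_sqrt; lra).
set (t := (Q2R a, Q2R b, Q2R c)).
set (delta := (Q2R a' - Q2R a, Q2R b' - Q2R b, Q2R c' - Q2R c)).
assert (Ht : rat_coords t) by (repeat split; apply is_rat_Q2R).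
assert (Hxd : evalK th delta = u ^ 2 * (s ^ 2 - 1)).
{ unfold delta. rewrite evalK_triple.
  replace (u ^ 2 * (s ^ 2 - 1)) with (lam ^ (n + 1) - lam ^ n)
    by (rewrite pow_add, lam_pow, <- Hs; ring).
  rewrite Hev, Hev'. ring. }
assert (Hdelta : delta = mulK (IZR p) (IZR q) t (al - 1, bl, cl)).
{ apply (coords_unique p q th Hroot no_rat_root).
  - repeat split; apply is_rat_sub; apply is_rat_Q2R.
  - apply rat_coords_mulK; auto. repeat split; auto. apply is_rat_sub; auto. apply (is_rat_IZR 1).
  - unfold t. rewrite Hxd, (evalK_mul _ _ _ Hroot), !evalK_triple, <- Hev, lam_pow.
    replace (al - 1 + bl * th + cl * th ^ 2) with (lam - 1) by lra. rewrite <- Hs. ring. }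
assert (Hnd : conj_norm (IZR p) th delta <= / u ^ 2 * (1 + / s) ^ 2).
{ rewrite Hdelta, (conj_norm_mul _ _ _ Hroot).
  rewrite (conj_norm_lam_pow n t Ht) by (unfold t; rewrite evalK_triple; auto).
  rewrite lam_pow. apply Rmult_le_compat_l; [left; apply Rinv_0_lt_compat, pow_lt; auto |].
  replace (/ s) with (sqrt (conj_norm (IZR p) th (al, bl, cl)))
    by (rewrite Hnl; apply sqrt_inv).
  apply conj_norm_shift_le. lra. }
assert (HK : K < u ^ 3 * (s * (s - 1))).
{ rewrite Rpower_lam in Hpow. fold s in Hpow.
  assert (0 < s * (s - 1)) by (apply Rmult_lt_0_compat; lra).
  apply (Rmult_lt_compat_r (s * (s - 1))) in Hpow; auto.
  unfold Rdiv in Hpow. rewrite Rmult_assoc, Rinv_l in Hpow by lra. lra. }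
assert (0 < Q2R c' - Q2R c); [|lra].
apply (third_coord_pos (IZR p) th (Q2R a' - Q2R a) (Q2R b' - Q2R b)); auto; fold delta; rewrite Hxd.
- apply Rmult_lt_0_compat; [apply pow_lt | ]; nra.
- replace ((u ^ 2 * (s ^ 2 - 1)) ^ 2) with ((u ^ 3 * (s * (s - 1))) ^ 2 * (/ u ^ 2 * (1 + / s) ^ 2))
    by (field; lra).
  assert (Hk := K_bound). assert (HK0 := K_nonneg). assert (Hk0 := kappa_nonneg).
  apply Rle_lt_trans with (4 * (3 * th ^ 2 - IZR p) / (3 * th ^ 2 - 4 * IZR p) * (/ u ^ 2 * (1 + / s) ^ 2)).
  + apply Rmult_le_compat_l; auto.
  + assert (Hw : 0 < / u ^ 2 * (1 + / s) ^ 2).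
    { apply Rmult_lt_0_compat; [apply Rinv_0_lt_compat, pow_lt; auto |].
      apply pow_lt. assert (0 < / s) by (apply Rinv_0_lt_compat; lra). lra. }
    apply Rmult_lt_compat_r; auto. nra.
Qed.

End UnitPowers.

Theorem mainTheorem9
  (p q : Z) (Hirr : cubic_irreducible p q)
  (theta : R) (Hroot : theta ^ 3 - IZR p * theta - IZR q = 0)
  (Huniq : forall x : R, x ^ 3 - IZR p * x - IZR q = 0 -> x = theta)
  (d : nat) (Hd : (0 < d)%nat)
  (HdOK : forall x : R, in_OK theta x ->
     exists u v w : Z, x = (IZR u + IZR v * theta + IZR w * theta ^ 2) / INR d)
  (lam : R) (Hunit : unit_OK theta lam) (Hlam : 1 < lam)
  (n : nat) (Hn : (1 <= n)%nat) :
  (forall a b c : Q,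
     lam ^ n = Q2R a + Q2R b * theta + Q2R c * theta ^ 2 ->
     Rpower lam (3 * INR n / 2) > (1 + sqrt 2) * C1_const p theta ->
     (0 < c)%Q)
  /\
  (forall a b c a' b' c' : Q,
     lam ^ n = Q2R a + Q2R b * theta + Q2R c * theta ^ 2 ->
     lam ^ (n + 1) = Q2R a' + Q2R b' * theta + Q2R c' * theta ^ 2 ->
     Rpower lam (3 * INR n / 2) >
       (1 + sqrt 2) * C1_const p theta / (sqrt lam * (sqrt lam - 1)) ->
     (c < c')%Q).
Proof.
assert (no_rat_root := cubic_no_rat_root p q (IrreducibleCubic.no_int_root p q Hirr)).
assert (discr := discr_pos p q theta Hroot no_rat_root Huniq).
assert (Hden : forall x, in_OK theta x -> in_Ztheta theta (INR d * x)).
{ intros x Hx. destruct (HdOK x Hx) as (u & v & w & ->). exists u, v, w.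
  rewrite evalK_triple. field. apply not_0_INR. lia. }
split.
- exact (third_coord_pow_pos p q theta Hroot no_rat_root discr d Hd Hden lam Hunit Hlam n).
- exact (third_coord_pow_increasing p q theta Hroot no_rat_root discr d Hd Hden lam Hunit Hlam n).
Qed.
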